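(* Let $0<\alpha<\pi/4$, $\beta=\pi/4$, and let $F,G_1,G_2$, $X_{\pm\pm}$, $s_{\max}$, $v$ be as in the context. Define $\bar M(s,\alpha)=e^{v(s)X_{++}}e^{v(s)X_{-+}}e^{v(s)X_{--}}e^{v(s)X_{+-}}$ and $\theta(\alpha)=\arcsin\left(\frac{-2\sqrt2\sin\alpha\cos\alpha}{1+\cos^2\alpha}\right)$. Then $$\bar M(0,\alpha)=\bar M(s_{\max},\alpha)=\begin{pmatrix}1&0&0\\0&\cos4\theta(\alpha)&\sin4\theta(\alpha)\\0&-\sin4\theta(\alpha)&\cos4\theta(\alpha)\end{pmatrix}.$$
   Context: $F=\cos\alpha\begin{pmatrix}0&-1&0\\1&0&0\\0&0&0\end{pmatrix}$, $G_1=\sin\alpha\sin\beta\begin{pmatrix}0&0&0\\0&0&-1\\0&1&0\end{pmatrix}$, $G_2=\sin\alpha\cos\beta\begin{pmatrix}0&0&-1\\0&0&0\\1&0&0\end{pmatrix}$, and $X_{ab}=F+aG_1+bG_2$ for $a,b\in\{+1,-1\}$. $s_{\max}=\arccos\left(-\frac{\sin^2\alpha}{1+\cos^2\alpha}\right)$. For $s\in[0,s_{\max}]$, $v(s)=\arccos\left[\frac{d-A(s)-B(s)-C(s)}{e-A(s)+B(s)}\right]$ with $A(s)=8\cos\alpha\sin^2\alpha\sin s$, $B(s)=2\sin^2(2\alpha)\cos s$, $C(s)=4\sin^4\alpha\cos(2s)$, $d=\sin^2(2\alpha)$, $e=5+2\cos2\alpha+\cos4\alpha$; this is the duration of interior bang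 arcs of normal extremals of $\dot x=(F+u_1G_1+u_2G_2)x$ on $S^2$ starting from $(0,0,1)$ whose first bang arc has duration $s$. *)

From HB Require Import structures.
From mathcomp Require Import all_boot all_order all_algebra.
From mathcomp Require Import all_classical all_reals all_analysis.
Set Implicit Arguments. Unset Strict Implicit. Unset Printing Implicit Defensive.
Import Order.TTheory GRing.Theory Num.Theory numFieldNormedType.Exports.
Local Open Scope ring_scope.

Section Defs.
Variable R : realType.

Definition mx3 (L : seq (seq R)) : 'M[R]_3 :=
  \matrix_(i < 3, j < 3) nth 0 (nth [::] L i) j.

Definition expm (A : 'M[R]_3) : 'M[R]_3 :=
  \matrix_(i, j) limn (fun N : nat => ((\sum_(k < N) (k`!%:R)^-1 *: A ^+ k) i j : R)).

Definition Fm (al : R) : 'M[R]_3 :=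
  cos al *: mx3 [:: [:: 0; -1; 0]; [:: 1; 0; 0]; [:: 0; 0; 0]].
Definition G1m (al be : R) : 'M[R]_3 :=
  (sin al * sin be) *: mx3 [:: [:: 0; 0; 0]; [:: 0; 0; -1]; [:: 0; 1; 0]].
Definition G2m (al be : R) : 'M[R]_3 :=
  (sin al * cos be) *: mx3 [:: [:: 0; 0; -1]; [:: 0; 0; 0]; [:: 1; 0; 0]].

(* X_{ab} = F + a G1 + b G2, a b in {+1,-1} *)
Definition Xm (al be a b : R) : 'M[R]_3 := Fm al + a *: G1m al be + b *: G2m al be.

Definition smax (al : R) : R := acos (- (sin al ^+ 2) / (1 + cos al ^+ 2)).

Definition vdur (al s : R) : R :=
  let A := 8 * cos al * sin al ^+ 2 * sin s in
  let B := 2 * sin (2 * al) ^+ 2 * cos s in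
  let C := 4 * sin al ^+ 4 * cos (2 * s) in
  let d := sin (2 * al) ^+ 2 in
  let e := 5 + 2 * cos (2 * al) + cos (4 * al) in
  acos ((d - A - B - C) / (e - A + B)).

Definition Mbar (s al : R) : 'M[R]_3 :=
  let be := pi / 4 in
  let v := vdur al s in
  expm (v *: Xm al be 1 1) *m expm (v *: Xm al be (-1) 1)
  *m expm (v *: Xm al be (-1) (-1)) *m expm (v *: Xm al be 1 (-1)).

Definition thetaa (al : R) : R :=
  asin ((- 2 * Num.sqrt 2 * sin al * cos al) / (1 + cos al ^+ 2)).

Definition rotx (t : R) : 'M[R]_3 :=
  mx3 [:: [:: 1; 0; 0]; [:: 0; cos t; sin t]; [:: 0; - sin t; cos t]].

End Defs.

From HB Require Import structures.
From mathcomp Require Import all_boot all_order all_algebra.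
From mathcomp Require Import all_classical all_reals all_analysis.
From mathcomp Require Import ring lra.
Set Implicit Arguments. Unset Strict Implicit. Unset Printing Implicit Defensive.
Import Order.TTheory GRing.Theory Num.Theory numFieldNormedType.Exports.
Local Open Scope ring_scope.

(* With beta = pi/4 every X_ab is the hat matrix of a unit vector, so X^3 = -X and
   exp(w X) = 1 + sin w X + (1 - cos w) X^2 (Rodrigues).  Both s = 0 and s = s_max
   satisfy v(s) = s_max, where cos s_max = - sin^2 a / (1 + cos^2 a) and
   sin s_max = 2 cos a / (1 + cos^2 a).  The product of the four Rodrigues matrices
   is then a rational function of cos a and sin a, which coincides with the rotation
   by 4 theta once the relation cos^2 a + sin^2 a = 1 is eliminated through a
   rational parametrization. *)

Lemma add1_sqr_gt0 (R : realDomainType) (x : R) : 0 < 1 + x ^+ 2.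
Proof. by rewrite ltr_pwDl ?sqr_ge0. Qed.

Lemma ellipse_rational_param (R : numFieldType) (m c v : R) :
  c ^+ 2 + m * v ^+ 2 = 1 -> 1 + c != 0 ->
  exists t, c = (1 - m * t ^+ 2) / (1 + m * t ^+ 2) /\ v = 2 * t / (1 + m * t ^+ 2).
Proof.
move=> on_ellipse c1_neq0; exists (v / (1 + c)).
have mv2 : m * v ^+ 2 = 1 - c ^+ 2 by rewrite -on_ellipse addrAC subrr add0r.
have mt2 : m * (v / (1 + c)) ^+ 2 = 2 / (1 + c) - 1.
  by rewrite expr_div_n mulrA mv2; field.
by split; rewrite mt2; field; rewrite c1_neq0 mulN1r addrC subrK pnatr_eq0.
Qed.

Section Rodrigues.
Variable R : realType.
Implicit Types (A : 'M[R]_3) (w : R).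

Definition rodrigues w A : 'M[R]_3 := 1 + sin w *: A + (1 - cos w) *: A ^+ 2.

Lemma expr_of_cube_opp A : A ^+ 3 = - A -> forall m,
  A ^+ m.*2.+1 = (-1) ^+ m *: A /\ A ^+ m.*2.+2 = (-1) ^+ m *: A ^+ 2.
Proof.
move=> A3; have AS3 n : A ^+ n.+3 = - A ^+ n.+1.
  by rewrite -[n.+3]addn3 exprD A3 mulrN -exprSr.
elim=> [|m [IHodd IHeven]]; first by rewrite !expr0 !scale1r.
by rewrite doubleS !AS3 IHodd IHeven exprS mulN1r !scaleNr.
Qed.

Lemma exp_term_of_cube_opp A w : A ^+ 3 = - A -> forall k,
  (k`!%:R)^-1 *: (w *: A) ^+ k =
  sin_coeff w k *: A - cos_coeff w k *: A ^+ 2 + (k == 0)%:R *: (1 + A ^+ 2).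
Proof.
move=> A3 k; rewrite exprZn scalerA -[k]odd_double_half /sin_coeff /cos_coeff.
case: (odd k) => /=; set m := k./2; rewrite odd_double /=.
- rewrite add1n (expr_of_cube_opp A3 m).1 !mul0r !scale0r subr0 addr0 scalerA.
  by rewrite half_double; congr (_ *: _); field; rewrite pnatr_eq0 -lt0n fact_gt0.
- rewrite add0n; case: m => [|m].
    rewrite /= expr0 !(mul1r, mul0r, invr1, scale0r, sub0r, scale1r) double0 expr0.
    by rewrite addrCA addNr addr0.
  rewrite half_double doubleS (expr_of_cube_opp A3 m).2 !mul0r scale0r sub0r /=.
  rewrite scale0r addr0 scalerA -scaleNr -exprnP [(-1) ^+ m.+1]exprS.
  by congr (_ *: _); set f := _`!%:R; set x := w ^+ _; set y := (-1) ^+ m; ring.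
Qed.

Lemma expm_rodrigues A w : A ^+ 3 = - A -> expm (w *: A) = rodrigues w A.
Proof.
move=> A3; apply/matrixP => i j; rewrite /expm mxE.
have partial_sum N : (\sum_(k < N) (k`!%:R)^-1 *: (w *: A) ^+ k) i j =
    series (sin_coeff w) N * A i j - series (cos_coeff w) N * (A ^+ 2) i j
    + (0 < N)%:R * (1 + A ^+ 2) i j.
  under eq_bigr do rewrite exp_term_of_cube_opp //.
  rewrite !big_split /= sumrN -!scaler_suml !mxE /series /= !big_mkord.
  congr (_ + _ * _); case: N => [|N]; first by rewrite big_ord0.
  by rewrite big_ord_recl /= big1 ?addr0.
have -> : rodrigues w A i j =
    sin w * A i j - cos w * (A ^+ 2) i j + 1 * (1 + A ^+ 2) i j.
  by rewrite !mxE; ring.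
rewrite (funext partial_sum); apply: (cvg_lim (@Rhausdorff R)).
apply: cvgD; first apply: cvgB; apply: cvgMr_tmp.
- by rewrite sin.unlock; exact: is_cvg_series_sin_coeff.
- by rewrite cos.unlock; exact: is_cvg_series_cos_coeff.
- by apply: cvg_near_cst; exists 1%N => // N /= ->.
Qed.

End Rodrigues.

Section Matrix3.
Variable R : realType.

Definition M3 (a b c d e f g h i : R) : 'M[R]_3 :=
  mx3 [:: [:: a; b; c]; [:: d; e; f]; [:: g; h; i]].

Lemma mul_M3 a b c d e f g h i a' b' c' d' e' f' g' h' i' :
  M3 a b c d e f g h i *m M3 a' b' c' d' e' f' g' h' i' =
  M3 (a*a' + b*d' + c*g') (a*b' + b*e' + c*h') (a*c' + b*f' + c*i')
     (d*a' + e*d' + f*g') (d*b' + e*e' + f*h') (d*c' + e*f' + f*i')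
     (g*a' + h*d' + i*g') (g*b' + h*e' + i*h') (g*c' + h*f' + i*i').
Proof.
apply/matrixP => x y; rewrite !mxE !big_ord_recr big_ord0 /= add0r !mxE.
by case: x => [[|[|[|?]]] ?] //; case: y => [[|[|[|?]]] ?].
Qed.

Lemma add_M3 a b c d e f g h i a' b' c' d' e' f' g' h' i' :
  M3 a b c d e f g h i + M3 a' b' c' d' e' f' g' h' i' =
  M3 (a+a') (b+b') (c+c') (d+d') (e+e') (f+f') (g+g') (h+h') (i+i').
Proof.
apply/matrixP => x y; rewrite !mxE.
by case: x => [[|[|[|?]]] ?] //; case: y => [[|[|[|?]]] ?] //=; rewrite addr0.
Qed.

Lemma scale_M3 k a b c d e f g h i :
  k *: M3 a b c d e f g h i = M3 (k*a) (k*b) (k*c) (k*d) (k*e) (k*f) (k*g) (k*h) (k*i).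
Proof.
apply/matrixP => x y; rewrite !mxE.
by case: x => [[|[|[|?]]] ?] //; case: y => [[|[|[|?]]] ?] //=; rewrite mulr0.
Qed.

Lemma one_M3 : 1 = M3 1 0 0 0 1 0 0 0 1.
Proof.
apply/matrixP => x y; rewrite !mxE.
by case: x => [[|[|[|?]]] ?] //; case: y => [[|[|[|?]]] ?].
Qed.

Definition hat (x y z : R) : 'M[R]_3 := M3 0 (- z) y z 0 (- x) (- y) x 0.

Lemma hat_cube x y z : hat x y z ^+ 3 = - ((x ^+ 2 + y ^+ 2 + z ^+ 2) *: hat x y z).
Proof.
rewrite !exprS expr0 mulr1 -!mulmxE /hat !mul_M3 -scaleNr scale_M3.
by congr M3; ring.
Qed.

Lemma hat_cube_unit x y z : x ^+ 2 + y ^+ 2 + z ^+ 2 = 1 -> hat x y z ^+ 3 = - hat x y z.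
Proof. by move=> unit; rewrite hat_cube unit scale1r. Qed.

End Matrix3.

Section Trigonometry.
Variable R : realType.
Implicit Types x : R.

Lemma cos_pi4_sin : cos (pi / 4) = sin (pi / 4) :> R.
Proof.
by rewrite -cosBpihalf (_ : pi / 4 - pi / 2 = - (pi / 4)) ?cosN //; field.
Qed.

Lemma sin_pi4 : sin (pi / 4) = Num.sqrt 2 / 2 :> R.
Proof.
have pi_gt0 := @pi_gt0 R.
have s_gt0 : 0 < sin (pi / 4 : R) by apply: sin_gt0_pihalf; apply/andP; split; lra.
have s2 : sin (pi / 4 : R) ^+ 2 = 1 / 2.
  by have := cos2Dsin2 (pi / 4 : R); rewrite cos_pi4_sin; lra.
apply/eqP; rewrite -(eqrXn2 (_ : 0 < 2)%N) ?divr_ge0 ?sqrtr_ge0 ?ltW //.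
by rewrite s2 expr_div_n sqr_sqrtr //; apply/eqP; field.
Qed.

Lemma cos_pi4 : cos (pi / 4) = Num.sqrt 2 / 2 :> R.
Proof. by rewrite cos_pi4_sin sin_pi4. Qed.

Lemma cos_double x : cos (2 * x) = 2 * cos x ^+ 2 - 1.
Proof. by rewrite (_ : 2 * x = x + x) ?cosD -?expr2 ?sin2cos2; ring. Qed.

End Trigonometry.

Section RotationProduct.
Variable R : realType.

Lemma rotxE (x : R) : rotx x = M3 1 0 0 0 (cos x) (sin x) 0 (- sin x) (cos x).
Proof. by []. Qed.

(* After substituting the rational parametrization of the ellipse c^2 + 2u^2 = 1,
   every entry is an identity between rational functions of the parameter. *)
Lemma rodrigues_product_rotx (c u w th : R) :
  c ^+ 2 + 2 * u ^+ 2 = 1 -> 1 + c != 0 ->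
  cos w = (c ^+ 2 - 1) / (1 + c ^+ 2) -> sin w = 2 * c / (1 + c ^+ 2) ->
  cos th = (3 * c ^+ 2 - 1) / (1 + c ^+ 2) -> sin th = - 4 * u * c / (1 + c ^+ 2) ->
  rodrigues w (hat u (- u) c) *m rodrigues w (hat (- u) (- u) c)
  *m rodrigues w (hat (- u) u c) *m rodrigues w (hat u u c) = rotx (4 * th).
Proof.
move=> on_ellipse c1_neq0 cw sw cth sth.
rewrite (_ : 4 * th = (th + th) + (th + th)); last by ring.
rewrite rotxE !(cosD, sinD) cth sth /rodrigues /hat sw cw !expr2 -!mulmxE.
rewrite !mul_M3 !scale_M3 one_M3 !add_M3 !mul_M3.
have [t [-> ->]] := ellipse_rational_param on_ellipse c1_neq0.
have t2_gt0 : 0 < 1 + 2 * t ^+ 2 by rewrite ltr_pwDl // mulr_ge0 // sqr_ge0.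
have t2_neq0 : 1 + 2 * t ^+ 2 != 0 by rewrite lt0r_neq0.
have t4_neq0 : (1 + 2 * t ^+ 2) ^+ 2 + (1 - 2 * t ^+ 2) ^+ 2 != 0.
  by rewrite lt0r_neq0 // ltr_wpDr ?sqr_ge0 // exprn_gt0.
by congr M3; field; rewrite t2_neq0 t4_neq0.
Qed.

End RotationProduct.

Section Angles.
Variable R : realType.
Implicit Types al : R.

Lemma Xm_pi4 al a b : let u := sin al * (Num.sqrt 2 / 2) in
  Xm al (pi / 4) a b = hat (a * u) (- (b * u)) (cos al).
Proof.
apply/matrixP => i j; rewrite /Xm /Fm /G1m /G2m cos_pi4 sin_pi4 !mxE.
by case: i => [[|[|[|?]]] ?] //; case: j => [[|[|[|?]]] ?] //=; ring.
Qed.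

Lemma smax_arg_itv al : -1 <= - (sin al ^+ 2) / (1 + cos al ^+ 2) <= 1.
Proof.
have c2_ge0 := sqr_ge0 (cos al); have cs := cos2Dsin2 al.
by rewrite ler_pdivlMr ?ler_pdivrMr; lra.
Qed.

Lemma cos_smax al : cos (smax al) = (cos al ^+ 2 - 1) / (1 + cos al ^+ 2).
Proof.
rewrite /smax acosK ?in_itv ?smax_arg_itv //.
by rewrite sin2cos2; field; rewrite gt_eqF ?add1_sqr_gt0.
Qed.

Lemma vdur0 al : vdur al 0 = smax al.
Proof.
rewrite /vdur /smax /= sin0 mulr0 cos0 mulr1 mulr0 cos0 mulr1 !subr0.
rewrite (_ : 4 * al = 2 * (2 * al)); last by ring.
have -> : sin al ^+ 4 = (sin al ^+ 2) ^+ 2 by rewrite -exprM.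
rewrite !sin2cos2 !cos_double.
by congr acos; field; apply/andP; split; apply: lt0r_neq0; nra.
Qed.

Lemma sin_smax al : 0 <= cos al -> sin (smax al) = 2 * cos al / (1 + cos al ^+ 2).
Proof.
move=> c_ge0; have den_gt0 := add1_sqr_gt0 (cos al).
rewrite /smax sin_acos ?smax_arg_itv //.
rewrite (_ : 1 - _ ^+ 2 = (2 * cos al / (1 + cos al ^+ 2)) ^+ 2).
  by rewrite sqrtr_sqr ger0_norm // divr_ge0 ?mulr_ge0 // ltW.
by rewrite sin2cos2; field; rewrite gt_eqF.
Qed.

Lemma vdur_smax al : 0 <= cos al -> 3 * cos al ^+ 2 != 1 -> vdur al (smax al) = smax al.
Proof.
move=> c_ge0 c2_neq; rewrite /vdur [RHS]/smax /=.
rewrite (_ : 4 * al = 2 * (2 * al)); last by ring.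
have -> : sin al ^+ 4 = (sin al ^+ 2) ^+ 2 by rewrite -exprM.
rewrite !cos_double !sin2cos2 !cos_double sin_smax // cos_smax.
have sq_gt0 : 0 < (3 * cos al ^+ 2 - 1) ^+ 2 by rewrite exprn_even_gt0 // subr_eq0.
by congr acos; field; apply/andP; split; apply: lt0r_neq0; nra.
Qed.

Lemma onem_sqr_thetaa_arg al :
  1 - (- 2 * Num.sqrt 2 * sin al * cos al / (1 + cos al ^+ 2)) ^+ 2 =
  ((3 * cos al ^+ 2 - 1) / (1 + cos al ^+ 2)) ^+ 2.
Proof.
rewrite expr_div_n !exprMn sqr_sqrtr // sin2cos2.
by field; rewrite gt_eqF ?add1_sqr_gt0.
Qed.

Lemma thetaa_arg_itv al :
  -1 <= - 2 * Num.sqrt 2 * sin al * cos al / (1 + cos al ^+ 2) <= 1.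
Proof.
have := sqr_ge0 ((3 * cos al ^+ 2 - 1) / (1 + cos al ^+ 2)).
by rewrite -onem_sqr_thetaa_arg => ?; apply/andP; split; nra.
Qed.

Lemma sin_thetaa al :
  sin (thetaa al) = - 2 * Num.sqrt 2 * sin al * cos al / (1 + cos al ^+ 2).
Proof. by rewrite /thetaa asinK // in_itv thetaa_arg_itv. Qed.

Lemma cos_thetaa al : 1 <= 3 * cos al ^+ 2 ->
  cos (thetaa al) = (3 * cos al ^+ 2 - 1) / (1 + cos al ^+ 2).
Proof.
move=> c2_ge; rewrite /thetaa cos_asin ?thetaa_arg_itv // onem_sqr_thetaa_arg.
by rewrite sqrtr_sqr ger0_norm // divr_ge0 ?subr_ge0 // addr_ge0 ?sqr_ge0.
Qed.

End Angles.

Lemma Mbar_rotx (R : realType) (s al : R) :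
  0 < cos al -> 1 <= 3 * cos al ^+ 2 -> vdur al s = smax al ->
  Mbar s al = rotx (4 * thetaa al).
Proof.
move=> c_gt0 c2_ge v_smax; rewrite /Mbar /= v_smax !Xm_pi4 /=.
set u := sin al * (Num.sqrt 2 / 2); rewrite !mul1r !mulN1r !opprK.
have on_ellipse : cos al ^+ 2 + 2 * u ^+ 2 = 1.
  by rewrite -[RHS](cos2Dsin2 al) /u exprMn expr_div_n sqr_sqrtr //; field.
have expmE x y : x ^+ 2 = u ^+ 2 -> y ^+ 2 = u ^+ 2 ->
    expm (smax al *: hat x y (cos al)) = rodrigues (smax al) (hat x y (cos al)).
  by move=> x2 y2; apply/expm_rodrigues/hat_cube_unit; rewrite x2 y2; lra.
rewrite !expmE; rewrite ?sqrrN //.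
apply: rodrigues_product_rotx => //.
- by rewrite lt0r_neq0 // addr_gt0.
- exact: cos_smax.
- exact/sin_smax/ltW.
- exact: cos_thetaa.
- by rewrite sin_thetaa /u; field; rewrite gt_eqF ?add1_sqr_gt0.
Qed.

Theorem corollary6 (R : realType) (al : R) :
  0 < al -> al < pi / 4 ->
  Mbar 0 al = rotx (4 * thetaa al) /\ Mbar (smax al) al = rotx (4 * thetaa al).
Proof.
move=> al_gt0 al_lt; have pi_gt0 := @pi_gt0 R.
have c_gt0 : 0 < cos al by apply: cos_gt0_pihalf; apply/andP; split; lra.
have c2_gt1 : 1 < 3 * cos al ^+ 2.
  have : 0 < cos (2 * al) by apply: cos_gt0_pihalf; apply/andP; split; lra.
  by rewrite cos_double; lra.
split; apply: Mbar_rotx; rewrite ?ltW //; first exact: vdur0.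
by rewrite vdur_smax ?ltW // gt_eqF.
Qed.
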